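(* Let $\mathbb{P}\subset\mathbb{R}^n$ be a polyhedron, $\mathbb{G}$ a nonempty face of $\mathbb{P}$, and $\mathfrak q\in(\mathbb{G}^* )^\circ|\mathbb{P}$. Then there is $r>0$ (depending on $\mathfrak q$) such that for all $\mathfrak n\in\mathbb{P}\setminus\mathbb{G}$ and $\mathfrak m\in\mathbb{G}$ one has $\mathrm{P}_{V(\mathbb{G})^\perp}(\mathfrak n-\mathfrak m)\ne0$ and $$\Big\langle\mathfrak q,\frac{\mathrm{P}_{V(\mathbb{G})^\perp}(\mathfrak n-\mathfrak m)}{|\mathrm{P}_{V(\mathbb{G})^\perp}(\mathfrak n-\mathfrak m)|}\Big\rangle\ge r.$$
   Context: A polyhedron is a finite intersection of closed half-spaces. For a polyhedron $\mathbb{Q}$ and a nonempty $\mathbb{G}\subset\mathbb{Q}$, $\mathbb{G}$ is a face of $\mathbb{Q}$ if there are $\mathfrak q,r$ with $\langle\mathfrak q,u\rangle=r$ on $\mathbb{G}$ and $>r$ on $\mathbb{Q}\setminus\mathbb{G}$; $(\mathbb{G}^* )^\circ|\mathbb{Q}=\{\mathfrak q\in\mathbb{R}^n\setminus\{0\}:\exists r,\langle\mathfrak q,u\rangle=r\ (u\in\mathbb{G}),\langle\mathfrak q,y\rangle>r\ (y\in\mathbb{Q}\setminus\mathbb{G})\}$. $V(\mathbb{G})=\mathrm{span}(\mathbb{G}-\mathfrak p)$ for any $\mathfrak p\in\mathbb{G}$ (the direction space of the affine hull), and $\mathrm{P}_{W}$ denotes orthogonal projection onto a subspace $W$. *)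

From HB Require Import structures.
From mathcomp Require Import all_boot all_order all_algebra.
From Stdlib Require Import ClassicalEpsilon.
Set Implicit Arguments. Unset Strict Implicit. Unset Printing Implicit Defensive.
Import Order.TTheory GRing.Theory Num.Theory.
Local Open Scope ring_scope.

Definition dotp (R : rcfType) (n : nat) (u v : 'rV[R]_n) : R :=
  \sum_(i < n) u 0 i * v 0 i.

Definition vnorm (R : rcfType) (n : nat) (v : 'rV[R]_n) : R :=
  Num.sqrt (dotp v v).

Definition is_polyhedron (R : rcfType) (n : nat) (P : 'rV[R]_n -> Prop) : Prop :=
  exists (k : nat) (a : 'I_k -> 'rV[R]_n) (b : 'I_k -> R),
    forall x, P x <-> (forall i, dotp (a i) x <= b i).

Definition is_face (R : rcfType) (n : nat) (Q G : 'rV[R]_n -> Prop) : Prop :=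
  (exists u, G u) /\ (forall u, G u -> Q u) /\
  exists (q : 'rV[R]_n) (r : R),
    (forall u, G u -> dotp q u = r) /\
    (forall y, Q y -> ~ G y -> r < dotp q y).

Definition in_dual_interior (R : rcfType) (n : nat) (Q G : 'rV[R]_n -> Prop)
    (q : 'rV[R]_n) : Prop :=
  q != 0 /\
  exists r : R,
    (forall u, G u -> dotp q u = r) /\
    (forall y, Q y -> ~ G y -> r < dotp q y).

(* V(G) = span (G - p), for p in G (independent of the choice of p). *)
Definition Vdir (R : rcfType) (n : nat) (G : 'rV[R]_n -> Prop) (v : 'rV[R]_n) : Prop :=
  exists p, G p /\
  exists (k : nat) (c : 'I_k -> R) (g : 'I_k -> 'rV[R]_n),
    (forall i, G (g i)) /\ v = \sum_(i < k) c i *: (g i - p).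

Definition is_projperp (R : rcfType) (n : nat) (G : 'rV[R]_n -> Prop)
    (x y : 'rV[R]_n) : Prop :=
  (forall v, Vdir G v -> dotp y v = 0) /\ Vdir G (x - y).

(* P_{V(G)^perp} x, chosen by Hilbert's epsilon (it exists and is unique). *)
Definition projperp (R : rcfType) (n : nat) (G : 'rV[R]_n -> Prop)
    (x : 'rV[R]_n) : 'rV[R]_n :=
  epsilon (inhabits 0) (is_projperp G x).

From HB Require Import structures.
From mathcomp Require Import all_boot all_order all_algebra.
From mathcomp Require Import ring lra.
From Stdlib Require Import ClassicalEpsilon Classical.
Set Implicit Arguments. Unset Strict Implicit. Unset Printing Implicit Defensive.
Import Order.TTheory GRing.Theory Num.Theory.
Local Open Scope ring_scope.

(* Write P = {x | <a i, x> <= b i} and let q expose the face G at level r0.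
   Call a constraint tight if it is active on all of G, and let c i be its
   normal (c i = 0 for the other constraints).  The proof runs as follows.
   - G has a relative interior point m0 (a mean of points of G), which
     satisfies every non-tight constraint strictly; from m0 one can move a
     little in any direction that does not increase the tight constraints.
   - Hence V(G) is the common kernel of the c i, so V(G)^perp is their span,
     the projection P_{V(G)^perp} exists (Gram-Schmidt), and the projection y
     of n - m lies in the cone {y in span c | <c i, y> <= 0} with <q, y> > 0.
   - This cone meets {<q, .> <= 0} only at 0; by Farkas' lemma every
     coordinate functional is then dominated on it by a multiple of <q, .>,
     which gives |y| <= tau <q, y> and so <q, y / |y|> >= 1 / (1 + tau). *)

Section InnerProduct.
Variables (R : rcfType) (n : nat).
Implicit Types (u v w : 'rV[R]_n) (a : R).

Lemma dotpC u v : dotp u v = dotp v u.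
Proof. by apply: eq_bigr => i _; rewrite mulrC. Qed.

Lemma dotpDr u v w : dotp u (v + w) = dotp u v + dotp u w.
Proof. by rewrite /dotp -big_split; apply: eq_bigr => i _; rewrite mxE mulrDr. Qed.

Lemma dotpZr a u v : dotp u (a *: v) = a * dotp u v.
Proof. by rewrite /dotp mulr_sumr; apply: eq_bigr => i _; rewrite mxE mulrCA. Qed.

Lemma dotpNr u v : dotp u (- v) = - dotp u v.
Proof. by rewrite -scaleN1r dotpZr mulN1r. Qed.

Lemma dotpBr u v w : dotp u (v - w) = dotp u v - dotp u w.
Proof. by rewrite dotpDr dotpNr. Qed.

Lemma dotp0r u : dotp u 0 = 0.
Proof. by rewrite -(scale0r 0) dotpZr mul0r. Qed.

Lemma dotpDl u v w : dotp (v + w) u = dotp v u + dotp w u.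
Proof. by rewrite !(dotpC _ u) dotpDr. Qed.

Lemma dotpZl a u v : dotp (a *: v) u = a * dotp v u.
Proof. by rewrite !(dotpC _ u) dotpZr. Qed.

Lemma dotpNl u v : dotp (- v) u = - dotp v u.
Proof. by rewrite !(dotpC _ u) dotpNr. Qed.

Lemma dotpBl u v w : dotp (v - w) u = dotp v u - dotp w u.
Proof. by rewrite !(dotpC _ u) dotpBr. Qed.

Lemma dotp0l u : dotp 0 u = 0.
Proof. by rewrite dotpC dotp0r. Qed.

Lemma dotp_suml k u (F : 'I_k -> 'rV[R]_n) :
  dotp (\sum_(i < k) F i) u = \sum_(i < k) dotp (F i) u.
Proof.
elim: k F => [|k IH] F; first by rewrite !big_ord0 dotp0l.
by rewrite !big_ord_recr /= dotpDl IH.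
Qed.

Lemma dotp_sumr k u (F : 'I_k -> 'rV[R]_n) :
  dotp u (\sum_(i < k) F i) = \sum_(i < k) dotp u (F i).
Proof. by rewrite dotpC dotp_suml; apply: eq_bigr => i _; rewrite dotpC. Qed.

Lemma dotpp_ge0 u : 0 <= dotp u u.
Proof. by apply: sumr_ge0 => i _; rewrite -expr2 sqr_ge0. Qed.

Lemma dotpp_eq0 u : dotp u u = 0 -> u = 0.
Proof.
move=> /eqP; rewrite psumr_eq0 => [/allP uu0|i _]; last by rewrite -expr2 sqr_ge0.
apply/rowP => j; have /implyP := uu0 j (mem_index_enum j).
by rewrite !mxE -expr2 sqrf_eq0 => /(_ isT)/eqP.
Qed.

Lemma dotpp_gt0 u : u != 0 -> 0 < dotp u u.
Proof.
by move=> u0; rewrite lt_def dotpp_ge0 andbT; apply: contra u0 => /eqP/dotpp_eq0 ->.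
Qed.

Lemma proj_coefK u v : dotp u v / dotp v v * dotp v v = dotp u v.
Proof.
have [/dotpp_eq0 ->|vv_neq0] := eqVneq (dotp v v) 0; last by rewrite mulfVK.
by rewrite !dotp0r !mul0r.
Qed.

Lemma dotp_delta (j : 'I_n) u : dotp (delta_mx 0 j) u = u 0 j.
Proof.
rewrite /dotp (bigD1 j) //= big1 ?addr0; first by rewrite mxE !eqxx mul1r.
by move=> i /negbTE ij; rewrite mxE ij andbF mul0r.
Qed.

Lemma vnorm_le_l1 v : vnorm v <= \sum_(j < n) `|v 0 j|.
Proof.
set S := \sum_(j < n) _; have S0 : 0 <= S by apply: sumr_ge0.
rewrite /vnorm -(ger0_norm S0) -sqrtr_sqr ler_sqrt ?sqr_ge0 // expr2.
rewrite /dotp mulr_suml; apply: ler_sum => j _.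
apply: le_trans (ler_norm _) _; rewrite normrM ler_wpM2l //.
by rewrite /S (bigD1 j) //= lerDl sumr_ge0.
Qed.

End InnerProduct.

Definition extend (T : Type) k (f : 'I_k -> T) (x : T) (i : 'I_k.+1) : T :=
  if unlift ord_max i is Some j then f j else x.

Lemma lift_maxW k (i : 'I_k) : lift ord_max i = widen_ord (leqnSn k) i.
Proof. exact/val_inj/lift_max. Qed.

Lemma extend_widen T k (f : 'I_k -> T) x (i : 'I_k) :
  extend f x (widen_ord (leqnSn k) i) = f i.
Proof. by rewrite /extend -lift_maxW liftK. Qed.

Lemma extend_max T k (f : 'I_k -> T) x : extend f x ord_max = x.
Proof. by rewrite /extend unlift_none. Qed.

Lemma forall_ordS k (Pr : 'I_k.+1 -> Prop) :
  (forall i, Pr (widen_ord (leqnSn k) i)) -> Pr ord_max -> forall i, Pr i.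
Proof.
by move=> Pw Pmax i; case: (unliftP ord_max i) => [j ->|->]; rewrite ?lift_maxW.
Qed.

Definition lincomb (R : rcfType) n k (mu : 'I_k -> R) (c : 'I_k -> 'rV[R]_n) : 'rV[R]_n :=
  \sum_(l < k) mu l *: c l.

Lemma dotp_lincomb_orth (R : rcfType) n k (mu : 'I_k -> R) (c : 'I_k -> 'rV[R]_n) v :
  (forall l, dotp (c l) v = 0) -> dotp (lincomb mu c) v = 0.
Proof. by move=> cv; rewrite dotp_suml big1 // => l _; rewrite dotpZl cv mulr0. Qed.

(* The coordinates of the functional <f, .> restricted to the span of c. *)
Definition coords (R : rcfType) n k (c : 'I_k -> 'rV[R]_n) (f : 'rV[R]_n) : 'rV[R]_k :=
  \row_l dotp f (c l).

Lemma dotp_lincomb (R : rcfType) n k (f : 'rV[R]_n) (mu : 'I_k -> R) (c : 'I_k -> 'rV[R]_n) :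
  dotp f (lincomb mu c) = dotp (coords c f) (\row_l mu l).
Proof.
by rewrite dotpC dotp_suml; apply: eq_bigr => l _; rewrite dotpZl dotpC !mxE mulrC.
Qed.

Definition incone (R : rcfType) n k (a : 'I_k -> 'rV[R]_n) (g : 'rV[R]_n) : Prop :=
  exists2 lam : 'I_k -> R, forall i, 0 <= lam i & g = lincomb lam a.

Lemma incone_recr (R : rcfType) n k (a : 'I_k.+1 -> 'rV[R]_n) (mu : 'I_k -> R) (l : R) :
  (forall i, 0 <= mu i) -> 0 <= l ->
  incone a (lincomb mu (fun i => a (widen_ord (leqnSn k) i)) + l *: a ord_max).
Proof.
move=> mu0 l0; exists (extend mu l).
  by apply: forall_ordS => [i|]; rewrite ?extend_widen ?extend_max.
rewrite /lincomb big_ord_recr extend_max; congr (_ + _).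
by apply: eq_bigr => i _; rewrite extend_widen.
Qed.

(* Scaled projection of v along a0 onto the hyperplane orthogonal to y. *)
Definition flatten (R : rcfType) n (a0 y v : 'rV[R]_n) : 'rV[R]_n :=
  dotp a0 y *: v - dotp v y *: a0.

Lemma dotp_flatten (R : rcfType) n (a0 y v z : 'rV[R]_n) : dotp a0 y != 0 ->
  dotp (flatten a0 y v) z = dotp a0 y * dotp v (z - (dotp a0 z / dotp a0 y) *: y).
Proof. by move=> c0; rewrite dotpBl !dotpZl dotpBr dotpZr; field. Qed.

Section FarkasStep.
(* The inductive step of Farkas' lemma: y separates g from the cone of all but
   the last generator, which lies strictly on the positive side of y. *)
Variables (R : rcfType) (n k : nat) (a : 'I_k.+1 -> 'rV[R]_n) (g y : 'rV[R]_n).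
Hypothesis a_y : forall i, dotp (a (widen_ord (leqnSn k) i)) y <= 0.
Hypothesis alast_y : 0 < dotp (a ord_max) y.
Hypothesis g_y : 0 < dotp g y.

Lemma incone_of_flatten :
  incone (fun i => flatten (a ord_max) y (a (widen_ord (leqnSn k) i)))
         (flatten (a ord_max) y g) -> incone a g.
Proof.
move=> [mu mu0 g_flat]; set a' := fun i => a (widen_ord (leqnSn k) i) in mu0 g_flat *.
pose c := dotp (a ord_max) y; have c0 : c != 0 by rewrite gt_eqF.
pose s := dotp g y - \sum_(i < k) mu i * dotp (a' i) y.
have s0 : 0 <= s.
  rewrite /s subr_ge0 (le_trans _ (ltW g_y)) //.
  by apply: sumr_le0 => i _; exact: mulr_ge0_le0 (mu0 i) (a_y i).
suff -> : g = lincomb mu a' + (s / c) *: a ord_max.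
  by apply: incone_recr => //; exact: divr_ge0 s0 (ltW alast_y).
apply: (scalerI c0); rewrite scalerDr scalerA mulrCA divff // mulr1 /s scalerBl.
move: g_flat; rewrite /flatten -/c /lincomb => /(canRL (subrK _)) ->.
rewrite (eq_bigr (fun i =>
  mu i *: (c *: a' i) - (mu i * dotp (a' i) y) *: a ord_max)); last first.
  by move=> i _; rewrite scalerBr -scalerA.
rewrite sumrB scaler_sumr -scaler_suml -addrA (addrC (- _)); congr (_ + _).
by apply: eq_bigr => i _; rewrite !scalerA mulrC.
Qed.

Lemma separator_of_flatten z :
  (forall i, dotp (flatten (a ord_max) y (a (widen_ord (leqnSn k) i))) z <= 0) ->
  0 < dotp (flatten (a ord_max) y g) z ->
  exists w, (forall i, dotp (a i) w <= 0) /\ 0 < dotp g w.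
Proof.
have c0 : dotp (a ord_max) y != 0 by rewrite gt_eqF.
move=> a_z g_z; exists (z - (dotp (a ord_max) z / dotp (a ord_max) y) *: y); split.
  apply: forall_ordS => [i|].
    by have := a_z i; rewrite dotp_flatten // pmulr_rle0.
  by rewrite dotpBr dotpZr mulfVK // subrr.
by move: g_z; rewrite dotp_flatten // pmulr_rgt0.
Qed.

End FarkasStep.

Lemma farkas_alt (R : rcfType) n k (a : 'I_k -> 'rV[R]_n) g :
  incone a g \/ exists y, (forall i, dotp (a i) y <= 0) /\ 0 < dotp g y.
Proof.
elim: k a g => [|k IH] a g.
  have [->|g0] := eqVneq g 0; last by right; exists g; split; [case | exact: dotpp_gt0].
  by left; exists (fun _ => 0) => //; rewrite /lincomb big_ord0.
have [|not_cone] := classic (incone a g); [by left | right].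
pose a' i := a (widen_ord (leqnSn k) i).
have [[mu mu0 g_eq]|[y [a'_y g_y]]] := IH a' g.
  apply: False_ind; apply: not_cone.
  by rewrite g_eq -[lincomb _ _]addr0 -(scale0r (a ord_max)); apply: incone_recr.
have [alast_y|alast_y] := lerP (dotp (a ord_max) y) 0.
  by exists y; split=> //; apply: forall_ordS.
have [cone_flat|[z [a_z g_z]]] :=
  IH (fun i => flatten (a ord_max) y (a' i)) (flatten (a ord_max) y g).
  by exfalso; apply: not_cone; apply: incone_of_flatten cone_flat.
exact: separator_of_flatten a_z g_z.
Qed.

Lemma farkas (R : rcfType) n k (a : 'I_k -> 'rV[R]_n) g :
  (forall y, (forall i, dotp (a i) y <= 0) -> dotp g y <= 0) -> incone a g.
Proof.
move=> sep; have [//|[y [a_y g_y]]] := farkas_alt a g.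
by have := sep y a_y; lra.
Qed.

Lemma orth_decomp (R : rcfType) n L (c : 'I_L -> 'rV[R]_n) x :
  exists mu : 'I_L -> R, forall l, dotp (c l) (x - lincomb mu c) = 0.
Proof.
elim: L c x => [|L IH] c x; first by exists (fun _ => 0); case.
pose c' i := c (widen_ord (leqnSn L) i).
have [mu x_res] := IH c' x; have [nu z_res] := IH c' (c ord_max).
pose w := x - lincomb mu c'; pose z := c ord_max - lincomb nu c'.
pose ka := dotp w z / dotp z z.
exists (extend (fun i => mu i - ka * nu i) ka).
have -> : x - lincomb (extend (fun i => mu i - ka * nu i) ka) c = w - ka *: z.
  rewrite /lincomb big_ord_recr /= extend_max /w /z /lincomb.
  under eq_bigr => i _ do rewrite extend_widen scalerBl -scalerA.
  by rewrite sumrB -scaler_sumr scalerBr !opprD !opprK !addrA addrAC.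
have c'_z l : dotp (c' l) (w - ka *: z) = 0 by rewrite dotpBr dotpZr x_res z_res mulr0 subrr.
apply: forall_ordS => //; rewrite -[c ord_max](subrK (lincomb nu c')) -/z dotpDl.
rewrite dotp_lincomb_orth // addr0 dotpBr dotpZr [dotp z w]dotpC /ka proj_coefK.
exact: subrr.
Qed.

Lemma small_scale_exists (R : rcfType) k (x s : 'I_k -> R) (Q : 'I_k -> Prop) :
  (forall j, Q j -> 0 < s j) -> exists2 t, 0 < t & forall j, Q j -> t * `|x j| <= s j.
Proof.
move=> s_gt0.
suff [t t0 small] : exists2 t, 0 < t & forall j, j \in enum 'I_k -> Q j -> t * `|x j| <= s j.
  by exists t => // j; apply: small; rewrite mem_enum.
elim: (enum 'I_k) => [|j r [t t0 small]]; first by exists 1.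
have [Qj|nQj] := classic (Q j); last first.
  by exists t => // i; rewrite inE => /orP [/eqP -> //|]; exact: small.
pose u := s j / (`|x j| + 1); have xj0 := normr_ge0 (x j).
have u0 : 0 < u by rewrite divr_gt0 ?s_gt0 // ltr_wpDl.
exists (Order.min t u) => [|i]; first by rewrite lt_min t0 u0.
rewrite inE => /orP [/eqP ->|ir] Qi.
  apply: le_trans (_ : u * `|x j| <= _); first by rewrite ler_wpM2r // ge_min lexx orbT.
  by rewrite /u mulrAC ler_pdivrMr ?ltr_wpDl // ler_wpM2l ?lerDl ?ler01 // ltW ?s_gt0.
by apply: le_trans (small i ir Qi); rewrite ler_wpM2r // ge_min lexx.
Qed.

Lemma mean_le (R : rcfType) k (f0 B : R) (f : 'I_k -> R) :
  f0 <= B -> (forall i, f i <= B) -> (f0 + \sum_(i < k) f i) / k.+1%:R <= B.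
Proof.
move=> f0B fB; rewrite ler_pdivrMr // -addn1 natrD mulrDr mulr1 addrC lerD //.
by apply: le_trans (ler_sum _ (fun i _ => fB i)) _; rewrite sumr_const card_ord mulr_natr.
Qed.

Lemma mean_lt (R : rcfType) k (f0 B : R) (f : 'I_k -> R) (j : 'I_k) :
  f0 <= B -> (forall i, f i <= B) -> f j < B -> (f0 + \sum_(i < k) f i) / k.+1%:R < B.
Proof.
move=> f0B fB fjB; rewrite ltr_pdivrMr // -addn1 natrD mulrDr mulr1 addrC ltr_leD //.
have -> : B * k%:R = \sum_(i < k) B by rewrite sumr_const card_ord mulr_natr.
rewrite (bigD1 j) //= [X in _ < X](bigD1 j) //=.
by rewrite ltr_leD // ler_sum.
Qed.

Lemma Vdir_orth (R : rcfType) n (G : 'rV[R]_n -> Prop) (c : 'rV[R]_n) (s : R) v :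
  (forall u, G u -> dotp c u = s) -> Vdir G v -> dotp c v = 0.
Proof.
move=> cG [p [Gp [k [coef [g [Gg ->]]]]]].
by rewrite dotp_sumr big1 // => i _; rewrite dotpZr dotpBr !cG // subrr mulr0.
Qed.

Lemma Vdir_step (R : rcfType) n (G : 'rV[R]_n -> Prop) (m0 v : 'rV[R]_n) (t : R) :
  G m0 -> 0 < t -> G (m0 + t *: v) -> Vdir G v.
Proof.
move=> Gm0 t0 Gt; exists m0; split=> //.
exists 1%N, (fun _ => t^-1), (fun _ => m0 + t *: v); split=> //.
by rewrite big_ord1 addrC addKr scalerA mulVf ?gt_eqF // scale1r.
Qed.

Definition pointed_cone (R : rcfType) n k (c : 'I_k -> 'rV[R]_n) (q : 'rV[R]_n) : Prop :=
  forall mu, (forall i, dotp (c i) (lincomb mu c) <= 0) ->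
    dotp q (lincomb mu c) <= 0 -> lincomb mu c = 0.

(* On such a cone every linear functional is dominated by a multiple of
   <q, .>: this is Farkas' lemma applied in the coordinates mu. *)
Lemma cone_linear_bound (R : rcfType) n k (c : 'I_k -> 'rV[R]_n) (q e : 'rV[R]_n) :
  pointed_cone c q ->
  exists2 tau, 0 <= tau & forall mu, (forall i, dotp (c i) (lincomb mu c) <= 0) ->
     dotp e (lincomb mu c) <= tau * dotp q (lincomb mu c).
Proof.
move=> pointed.
have [lam lam0 e_comb] : incone (extend (fun i => coords c (c i)) (coords c q)) (coords c e).
  apply: farkas => z z_le.
  have zE : z = \row_l z 0 l by apply/rowP => l; rewrite mxE.
  have y0 : lincomb (fun l => z 0 l) c = 0.
    apply: pointed => [i|]; rewrite dotp_lincomb -zE.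
      by have := z_le (widen_ord (leqnSn k) i); rewrite extend_widen.
    by have := z_le ord_max; rewrite extend_max.
  by have := dotp_lincomb e (fun l => z 0 l) c; rewrite -zE y0 dotp0r => <-.
exists (lam ord_max) => // mu cone_mu.
rewrite !dotp_lincomb e_comb /lincomb big_ord_recr /= extend_max.
rewrite dotpDl dotp_suml dotpZl gerDr.
apply: sumr_le0 => i _; rewrite extend_widen dotpZl -dotp_lincomb.
exact: mulr_ge0_le0 (lam0 _) (cone_mu i).
Qed.

(* Consequently the Euclidean norm is dominated by a multiple of <q, .> on the
   cone: bound each coordinate using the functionals <+-delta_j, .>. *)
Lemma cone_norm_bound (R : rcfType) n k (c : 'I_k -> 'rV[R]_n) (q : 'rV[R]_n) :
  pointed_cone c q ->
  exists2 tau, 0 <= tau & forall mu, (forall i, dotp (c i) (lincomb mu c) <= 0) ->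
     vnorm (lincomb mu c) <= tau * dotp q (lincomb mu c).
Proof.
move=> pointed.
have [tp tp0 tpB] :=
  fin_all_exists2 (fun j : 'I_n => cone_linear_bound (delta_mx 0 j) pointed).
have [tm tm0 tmB] :=
  fin_all_exists2 (fun j : 'I_n => cone_linear_bound (- delta_mx 0 j) pointed).
exists (\sum_(j < n) (tp j + tm j)) => [|mu cone_mu].
  by apply: sumr_ge0 => j _; apply: addr_ge0.
set y := lincomb mu c; set s := dotp q y.
have s0 : 0 <= s.
  rewrite leNgt; apply/negP => s_lt0.
  have y0 : y = 0 by apply: pointed; rewrite // ltW.
  by move: s_lt0; rewrite /s y0 dotp0r ltxx.
apply: le_trans (vnorm_le_l1 y) _; rewrite mulr_suml; apply: ler_sum => j _.
have := tpB j mu cone_mu; have := tmB j mu cone_mu; rewrite dotpNl dotp_delta -/y -/s.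
have := mulr_ge0 (tp0 j) s0; have := mulr_ge0 (tm0 j) s0.
rewrite mulrDl ler_norml; lra.
Qed.

Section ExposedFace.
Variables (R : rcfType) (n k : nat) (a : 'I_k -> 'rV[R]_n) (b : 'I_k -> R).
Variables (P G : 'rV[R]_n -> Prop) (q : 'rV[R]_n) (r0 : R).
Hypothesis P_def : forall x, P x <-> (forall i, dotp (a i) x <= b i).
Hypothesis q_on_G : forall u, G u -> dotp q u = r0.
Hypothesis q_off_G : forall y, P y -> ~ G y -> r0 < dotp q y.

Lemma P_le y i : P y -> dotp (a i) y <= b i.
Proof. by move/P_def. Qed.

Lemma face_char y : P y -> dotp q y <= r0 -> G y.
Proof. by move=> Py qy; apply: NNPP => nGy; have := q_off_G Py nGy; lra. Qed.

Lemma level_ge y : P y -> r0 <= dotp q y.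
Proof.
by move=> Py; have [Gy|nGy] := classic (G y); [rewrite q_on_G | exact/ltW/q_off_G].
Qed.

Definition tight (i : 'I_k) : Prop := forall u, G u -> dotp (a i) u = b i.

Definition tight_normal (i : 'I_k) : 'rV[R]_n :=
  if excluded_middle_informative (tight i) then a i else 0.

Lemma tight_normal_cases i : (tight i /\ tight_normal i = a i) \/ tight_normal i = 0.
Proof.
by rewrite /tight_normal; destruct (excluded_middle_informative (tight i)); [left|right].
Qed.

Lemma tight_normalE i : tight i -> tight_normal i = a i.
Proof. by rewrite /tight_normal; destruct (excluded_middle_informative (tight i)). Qed.

Lemma tight_normal_orth i v : Vdir G v -> dotp (tight_normal i) v = 0.
Proof.
move=> Vv; have [[ti ->]|->] := tight_normal_cases i; last exact: dotp0l.
exact: Vdir_orth ti Vv.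
Qed.

Lemma tight_normal_le i y :
  (tight i -> dotp (a i) y <= 0) -> dotp (tight_normal i) y <= 0.
Proof. by move=> le_y; have [[ti ->]|->] := tight_normal_cases i; rewrite ?le_y ?dotp0l. Qed.

(* A relative interior point of G: it satisfies every non-tight constraint
   strictly.  It is the mean of points witnessing each strict inequality. *)
Lemma relint_point :
  (forall u, G u -> P u) -> (exists u, G u) ->
  exists2 m0, G m0 & forall j, ~ tight j -> dotp (a j) m0 < b j.
Proof.
move=> G_sub_P [gw Ggw].
have strict_pt j : exists g, G g /\ (~ tight j -> dotp (a j) g < b j).
  have [tj|ntj] := classic (tight j); first by exists gw.
  have [u [Gu au]] : exists u, G u /\ dotp (a j) u != b j.
    apply: NNPP => none; apply: ntj => u Gu; apply: NNPP => au.
    by apply: none; exists u; split=> //; apply/eqP.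
  by exists u; split=> // _; rewrite lt_neqAle au (P_le j (G_sub_P u Gu)).
have [g gP] := fin_all_exists strict_pt.
pose m0 := k.+1%:R^-1 *: (gw + \sum_(j < k) g j).
have dotp_m0 c : dotp c m0 = (dotp c gw + \sum_(j < k) dotp c (g j)) / k.+1%:R.
  by rewrite dotpZr dotpDr dotp_sumr mulrC.
have G_g i : G (g i) by case: (gP i).
have in_P y j : G y -> dotp (a j) y <= b j by move=> Gy; apply: P_le; apply: G_sub_P.
exists m0 => [|j ntj].
  apply: face_char.
    by apply/P_def => j; rewrite dotp_m0; apply: mean_le => [|i]; apply: in_P.
  by rewrite dotp_m0; apply: mean_le => [|i]; rewrite q_on_G.
rewrite dotp_m0; apply: (mean_lt (j := j)) => [|i|]; try exact: in_P.
exact: (proj2 (gP j) ntj).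
Qed.

Variable m0 : 'rV[R]_n.
Hypothesis G_m0 : G m0.
Hypothesis m0_strict : forall j, ~ tight j -> dotp (a j) m0 < b j.

Lemma small_step v : exists2 t, 0 < t & forall s, `|s| <= t ->
  (forall i, tight i -> s * dotp (a i) v <= 0) -> P (m0 + s *: v).
Proof.
have [j ntj|t t0 small] := @small_scale_exists _ _ (fun j => dotp (a j) v)
    (fun j => b j - dotp (a j) m0) (fun j => ~ tight j).
  by rewrite subr_gt0 m0_strict.
exists t => // s st tight_s; apply/P_def => j; rewrite dotpDr dotpZr.
have [tj|ntj] := classic (tight j).
  by rewrite (tj m0 G_m0); have := tight_s j tj; lra.
have : s * dotp (a j) v <= t * `|dotp (a j) v|.
  by apply: le_trans (ler_norm _) _; rewrite normrM ler_wpM2r.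
have := small j ntj; lra.
Qed.

Lemma ker_sub_Vdir v : (forall i, dotp (tight_normal i) v = 0) -> Vdir G v.
Proof.
move=> ker_v; have [t t0 step] := small_step v.
have P_step s : `|s| <= t -> P (m0 + s *: v).
  move=> st; apply: step => // i ti.
  by rewrite -(tight_normalE ti) ker_v mulr0.
have Pt : P (m0 + t *: v) by apply: P_step; rewrite gtr0_norm.
have Pmt : P (m0 + (- t) *: v) by apply: P_step; rewrite normrN gtr0_norm.
apply: (Vdir_step G_m0 t0); apply: face_char => //.
have := level_ge Pt; have := level_ge Pmt; rewrite !dotpDr !dotpZr q_on_G // mulNr.
lra.
Qed.

Lemma projperp_spec x : is_projperp G x (projperp G x).
Proof.
apply: (epsilon_spec (inhabits 0) (is_projperp G x)).
have [mu x_res] := orth_decomp tight_normal x.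
exists (lincomb mu tight_normal); split; last exact: ker_sub_Vdir.
by move=> v Vv; apply: dotp_lincomb_orth => i; exact: tight_normal_orth.
Qed.

Lemma perp_in_span y :
  (forall v, Vdir G v -> dotp y v = 0) -> exists mu, y = lincomb mu tight_normal.
Proof.
move=> y_perp; have [mu y_res] := orth_decomp tight_normal y; exists mu.
apply/eqP; rewrite -subr_eq0; apply/eqP/dotpp_eq0.
rewrite dotpBl y_perp ?(dotp_lincomb_orth mu y_res) ?subrr //.
exact: ker_sub_Vdir.
Qed.

Lemma cone_pointed : pointed_cone tight_normal q.
Proof.
move=> mu cone_y qy; set y := lincomb mu tight_normal in cone_y qy *.
have [t t0 step] := small_step y.
have Pt : P (m0 + t *: y).
  apply: step => [|i ti]; first by rewrite gtr0_norm.
  by rewrite -(tight_normalE ti); exact: mulr_ge0_le0 (ltW t0) (cone_y i).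
have Vy : Vdir G y.
  apply: (Vdir_step G_m0 t0); apply: face_char => //.
  by rewrite dotpDr dotpZr q_on_G // gerDl pmulr_rle0.
apply: dotpp_eq0; rewrite {1}/y dotp_lincomb_orth // => i.
exact: tight_normal_orth.
Qed.

Lemma face_direction_bound : exists r : R, 0 < r /\
  forall nn m, P nn -> ~ G nn -> G m ->
    projperp G (nn - m) != 0 /\
    r <= dotp q ((vnorm (projperp G (nn - m)))^-1 *: projperp G (nn - m)).
Proof.
have [tau tau0 bound] := cone_norm_bound cone_pointed.
have tau1_gt0 : 0 < 1 + tau by lra.
exists (1 + tau)^-1; split=> [|nn m Pnn nGnn Gm]; first by rewrite invr_gt0.
set y := projperp G (nn - m); have [y_perp xy_V] := projperp_spec (nn - m).
have [mu y_eq] := perp_in_span y_perp.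
have qy_gt0 : 0 < dotp q y.
  have := Vdir_orth q_on_G xy_V; rewrite !dotpBr (q_on_G Gm).
  have := q_off_G Pnn nGnn; lra.
have y_neq0 : y != 0 by apply: contraTneq qy_gt0 => ->; rewrite dotp0r ltxx.
split=> //.
have cone_y i : dotp (tight_normal i) (lincomb mu tight_normal) <= 0.
  rewrite -y_eq; apply: tight_normal_le => ti.
  have := tight_normal_orth i xy_V; rewrite (tight_normalE ti) !dotpBr (ti m Gm).
  have := P_le i Pnn; lra.
have := bound mu cone_y; rewrite -y_eq => ny_le.
have ny_gt0 : 0 < vnorm y by rewrite /vnorm sqrtr_gt0 dotpp_gt0.
rewrite dotpZr mulrC ler_pdivlMr // mulrC ler_pdivrMr // mulrDr mulr1.
by move: ny_le; rewrite -/y mulrC; lra.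
Qed.

End ExposedFace.

Theorem mainTheorem15 (R : rcfType) (n : nat) (P G : 'rV[R]_n -> Prop)
    (q : 'rV[R]_n) :
  is_polyhedron P ->
  is_face P G ->
  in_dual_interior P G q ->
  exists r : R, 0 < r /\
    forall nn m : 'rV[R]_n, P nn -> ~ G nn -> G m ->
      projperp G (nn - m) != 0 /\
      r <= dotp q ((vnorm (projperp G (nn - m)))^-1 *: projperp G (nn - m)).
Proof.
move=> [k [a [b P_def]]] [G_nonempty [G_sub_P _]] [_ [r0 [q_on_G q_off_G]]].
have [m0 G_m0 m0_strict] := relint_point P_def q_on_G q_off_G G_sub_P G_nonempty.
exact (face_direction_bound P_def q_on_G q_off_G G_m0 m0_strict).
Qed.
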